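(* Let $I\subseteq\mathbb{R}$ be an interval, $p\in I$, and let $f: I\to\mathbb{R}$ be a continuous star-convex function with center $p$. Then: (i) if $f|_{]-\infty,p]\cap I}$ and $f|_{[p,\infty[\cap I}$ are both convex, then $epi(f)$ is a star-convex set; (ii) if $f|_{]-\infty,p]\cap I}$ and $f|_{[p,\infty[\cap I}$ are both concave, then $hypo(f)$ is a star-convex set; (iii) if $f|_{]-\infty,p]\cap I}$ is convex and $f|_{[p,\infty[\cap I}$ is concave, then $\{(x,t): x\in\,]-\infty,p]\cap I,\ f(x)\leq t\}\cup\{(x,t): x\in[p,\infty[\cap I,\ f(x)\geq t\}$ is a star-convex set; (iv) if $f|_{]-\infty,p]\cap I}$ is concave and $f|_{[p,\infty[\cap I}$ is convex, then $\{(x,t): x\in\,]-\infty,p]\cap I,\ f(x)\geq t\}\cup\{(x,t): x\in[p,\infty[\cap I,\ f(x)\leq t\}$ is a star-convex set.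
   Context: $epi(f)=\{(x,t)\in I\times\mathbb{R}: f(x)\leq t\}$ and $hypo(f)=\{(x,t)\in I\times\mathbb{R}: f(x)\geq t\}$. A function $f: I\to\mathbb{R}$ is star-convex with center $p\in I$ if for every $x\in I$, either $f(tx+(1-t)p)\leq tf(x)+(1-t)f(p)$ for all $t\in[0,1]$, or $f(tx+(1-t)p)\geq tf(x)+(1-t)f(p)$ for all $t\in[0,1]$. A set $X\subseteq\mathbb{R}^2$ is star-convex if there exists $x_0\in X$ such that for all $x\in X$ and $t\in[0,1]$, $tx+(1-t)x_0\in X$. *)

From Stdlib Require Import Reals.
Open Scope R_scope.

Definition is_interval (I : R -> Prop) : Prop :=
  forall x y z, I x -> I y -> x <= z <= y -> I z.

Definition continuous_on (I : R -> Prop) (f : R -> R) : Prop :=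
  forall x, I x -> forall eps, 0 < eps -> exists delta, 0 < delta /\
    forall y, I y -> Rabs (y - x) < delta -> Rabs (f y - f x) < eps.

Definition star_convex_fun (I : R -> Prop) (f : R -> R) (p : R) : Prop :=
  I p /\
  forall x, I x ->
    (forall t, 0 <= t <= 1 -> f (t * x + (1 - t) * p) <= t * f x + (1 - t) * f p) \/
    (forall t, 0 <= t <= 1 -> f (t * x + (1 - t) * p) >= t * f x + (1 - t) * f p).

Definition convex_on (D : R -> Prop) (f : R -> R) : Prop :=
  forall x y t, D x -> D y -> 0 <= t <= 1 ->
    f (t * x + (1 - t) * y) <= t * f x + (1 - t) * f y.

Definition concave_on (D : R -> Prop) (f : R -> R) : Prop :=
  forall x y t, D x -> D y -> 0 <= t <= 1 ->
    f (t * x + (1 - t) * y) >= t * f x + (1 - t) * f y.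

Definition left_part (I : R -> Prop) (p : R) : R -> Prop := fun x => x <= p /\ I x.
Definition right_part (I : R -> Prop) (p : R) : R -> Prop := fun x => p <= x /\ I x.

Definition star_convex_set (X : R * R -> Prop) : Prop :=
  exists x0, X x0 /\ forall x t, X x -> 0 <= t <= 1 ->
    X (t * fst x + (1 - t) * fst x0, t * snd x + (1 - t) * snd x0).

Definition epigraph (I : R -> Prop) (f : R -> R) : R * R -> Prop :=
  fun z => I (fst z) /\ f (fst z) <= snd z.

Definition hypograph (I : R -> Prop) (f : R -> R) : R * R -> Prop :=
  fun z => I (fst z) /\ f (fst z) >= snd z.

From Stdlib Require Import Reals Lra.
Open Scope R_scope.

(* The point (p, f p) is a common star centre.  On each half of I, the chord
   of f from x to p lies above (convex half) or below (concave half) the graph,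
   so moving a point of the epigraph (resp. hypograph) of that half towards
   (p, f p) keeps it there; the sets of the theorem are unions of such pieces. *)

Definition star_domain (D : R -> Prop) (p : R) : Prop :=
  forall x t, D x -> 0 <= t <= 1 -> D (t * x + (1 - t) * p).

Definition star_center (X : R * R -> Prop) (c : R * R) : Prop :=
  X c /\ forall z t, X z -> 0 <= t <= 1 ->
    X (t * fst z + (1 - t) * fst c, t * snd z + (1 - t) * snd c).

Lemma star_convex_set_intro (X : R * R -> Prop) (c : R * R) :
  star_center X c -> star_convex_set X.
Proof. intros Hc. exists c. exact Hc. Qed.

Lemma star_center_or (X Y : R * R -> Prop) (c : R * R) :
  star_center X c -> star_center Y c -> star_center (fun z => X z \/ Y z) c.
Proof.
  intros [Xc HX] [_ HY]. split; [now left|].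
  intros z t [Xz | Yz] Ht; [left; now apply HX | right; now apply HY].
Qed.

Lemma star_center_ext (X Y : R * R -> Prop) (c : R * R) :
  (forall z, X z <-> Y z) -> star_center X c -> star_center Y c.
Proof.
  intros HXY [Xc HX]. split; [now apply HXY|].
  intros z t Yz Ht. apply HXY, HX; [now apply HXY | exact Ht].
Qed.

Lemma is_interval_star_domain (I : R -> Prop) (p : R) :
  is_interval I -> I p -> star_domain I p.
Proof.
  intros HI Ip x t Ix Ht. destruct (Rle_dec x p).
  - apply (HI x p); auto; nra.
  - apply (HI p x); auto; nra.
Qed.

Lemma left_part_star_domain (I : R -> Prop) (p : R) :
  is_interval I -> I p -> star_domain (left_part I p) p.
Proof.
  intros HI Ip x t [Hxp Ix] Ht.
  split; [nra | now apply is_interval_star_domain].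
Qed.

Lemma right_part_star_domain (I : R -> Prop) (p : R) :
  is_interval I -> I p -> star_domain (right_part I p) p.
Proof.
  intros HI Ip x t [Hpx Ix] Ht.
  split; [nra | now apply is_interval_star_domain].
Qed.

Lemma convex_on_epigraph_star_center (D : R -> Prop) (f : R -> R) (p : R) :
  D p -> star_domain D p -> convex_on D f -> star_center (epigraph D f) (p, f p).
Proof.
  intros Dp HD Hf. split; [split; simpl; [exact Dp | lra]|].
  intros [x s] t [Dx Hs] Ht; simpl in *. split; [now apply HD|].
  pose proof (Hf x p t Dx Dp Ht). simpl. nra.
Qed.

Lemma concave_on_hypograph_star_center (D : R -> Prop) (f : R -> R) (p : R) :
  D p -> star_domain D p -> concave_on D f -> star_center (hypograph D f) (p, f p).
Proof.
  intros Dp HD Hf. split; [split; simpl; [exact Dp | lra]|].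
  intros [x s] t [Dx Hs] Ht; simpl in *. split; [now apply HD|].
  pose proof (Hf x p t Dx Dp Ht). simpl. nra.
Qed.

Lemma restrict_to_halves (I : R -> Prop) (p : R) (Q : R * R -> Prop) (z : R * R) :
  I (fst z) /\ Q z <->
  (left_part I p (fst z) /\ Q z) \/ (right_part I p (fst z) /\ Q z).
Proof.
  unfold left_part, right_part.
  destruct (Rle_dec (fst z) p); split; intuition lra.
Qed.

Theorem theorem4p2 (I : R -> Prop) (p : R) (f : R -> R) :
  is_interval I -> I p -> continuous_on I f -> star_convex_fun I f p ->
  (convex_on (left_part I p) f -> convex_on (right_part I p) f ->
     star_convex_set (epigraph I f)) /\
  (concave_on (left_part I p) f -> concave_on (right_part I p) f ->
     star_convex_set (hypograph I f)) /\
  (convex_on (left_part I p) f -> concave_on (right_part I p) f ->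
     star_convex_set (fun z => (left_part I p (fst z) /\ f (fst z) <= snd z) \/
                               (right_part I p (fst z) /\ f (fst z) >= snd z))) /\
  (concave_on (left_part I p) f -> convex_on (right_part I p) f ->
     star_convex_set (fun z => (left_part I p (fst z) /\ f (fst z) >= snd z) \/
                               (right_part I p (fst z) /\ f (fst z) <= snd z))).
Proof.
  intros HI Ip _ _.
  assert (Lp : left_part I p p) by (split; [lra | exact Ip]).
  assert (Rp : right_part I p p) by (split; [lra | exact Ip]).
  pose proof (left_part_star_domain I p HI Ip) as HL.
  pose proof (right_part_star_domain I p HI Ip) as HR.
  split; [|split; [|split]]; intros H1 H2; apply (star_convex_set_intro _ (p, f p)).
  - apply (star_center_ext _ _ _
      (fun z => iff_sym (restrict_to_halves I p (fun z => f (fst z) <= snd z) z))).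
    apply star_center_or; now apply convex_on_epigraph_star_center.
  - apply (star_center_ext _ _ _
      (fun z => iff_sym (restrict_to_halves I p (fun z => f (fst z) >= snd z) z))).
    apply star_center_or; now apply concave_on_hypograph_star_center.
  - apply star_center_or.
    + now apply convex_on_epigraph_star_center.
    + now apply concave_on_hypograph_star_center.
  - apply star_center_or.
    + now apply concave_on_hypograph_star_center.
    + now apply convex_on_epigraph_star_center.
Qed.
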